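(* Let $\mathcal{X}=\{\boldsymbol{x}_j\}_{j=1}^{N}$ have ground-truth partition $\mathcal{S}^*=\{\mathcal{S}_k^*\}_{k=1}^K$ with $K\ge 2$, let $\omega>0$, and let $\mathcal{Z}^*=\{\boldsymbol{z}_j^*\}_{j=1}^N\subset\mathbb{R}^D\setminus\{\mathbf 0\}$ satisfy the conflict-free condition: $\theta_{\boldsymbol{z}_j^*,\boldsymbol{z}_{j'}^*}=0$ whenever $\boldsymbol{x}_j,\boldsymbol{x}_{j'}$ lie in the same cluster, and $\theta_{\boldsymbol{z}_j^*,\boldsymbol{z}_{j'}^*}\ge\pi/\omega$ whenever they lie in different clusters. Then every constraint derived from $\mathcal{S}^*$ uniquely determines its angle (in the sense defined in the context) if and only if (i) $\mathcal{Z}^*$ is equidistant among clusters, i.e. there is $\theta^*>0$ with $\theta_{\boldsymbol{z}_j^*,\boldsymbol{z}_{j'}^*}=\theta^*$ for all $\boldsymbol{x}_j\in\mathcal{S}_k^*$, $\boldsymbol{x}_{j'}\in\mathcal{S}_{k'}^*$ with $k\ne k'$; and (ii) $\omega=\omega^*:=\pi/\theta^*$.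
   Context: For nonzero vectors $\boldsymbol{u},\boldsymbol{v}$, $\theta_{\boldsymbol{u},\boldsymbol{v}}\in[0,\pi]$ denotes the angle between them. A constraint $(j,j',y)$ derived from $\mathcal{S}^*$ has $y=1$ if $\boldsymbol{x}_j,\boldsymbol{x}_{j'}$ are in the same cluster and $y=0$ otherwise. A zero-loss positive constraint forces angle $0$, while a zero-loss negative constraint only forces angle $\ge\pi/\omega$. ''Every constraint uniquely determines its angle'' means: for every positive constraint $(j,j',1)$ the angle $\theta_{\boldsymbol{z}_j^*,\boldsymbol{z}_{j'}^*}$ equals $0$, and for every negative constraint $(j,j',0)$ the angle $\theta_{\boldsymbol{z}_j^*,\boldsymbol{z}_{j'}^*}$ equals exactly the enforced separation $\pi/\omega$ (rather than being merely bounded below by it). *)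

From HB Require Import structures.
From mathcomp Require Import all_boot all_order all_algebra.
From mathcomp Require Import all_classical all_reals all_analysis.
Set Implicit Arguments. Unset Strict Implicit. Unset Printing Implicit Defensive.
Import Order.TTheory GRing.Theory Num.Theory.
Local Open Scope ring_scope.

Definition dotv {R : realType} {D : nat} (u v : 'rV[R]_D) : R :=
  \sum_(i < D) u 0 i * v 0 i.
Definition normv {R : realType} {D : nat} (u : 'rV[R]_D) : R :=
  Num.sqrt (dotv u u).

Definition angle {R : realType} {D : nat} (u v : 'rV[R]_D) : R :=
  acos (dotv u v / (normv u * normv v)).

From HB Require Import structures.
From mathcomp Require Import all_boot all_order all_algebra.
From mathcomp Require Import all_classical all_reals all_analysis.
Import Order.TTheory GRing.Theory Num.Theory.
Local Open Scope ring_scope.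

(* Positive constraints fix their angle to 0 by the conflict-free condition,
   so the claim reduces to: every inter-cluster angle equals pi / omega iff
   all of them equal a common theta with omega = pi / theta, and the map
   t |-> pi / t is an involution. *)

Lemma div_eq_swap (F : fieldType) (a x y : F) :
  a != 0 -> y = a / x -> x = a / y.
Proof. by move=> a0 ->; rewrite invf_div mulrC divfK. Qed.

(* Cluster labels lab : 'I_N -> 'I_K encode the partition; surjectivity means
   every cluster is nonempty, and a constraint (j, j', y) has y = 1 iff
   lab j = lab j'. *)
Theorem proposition2 (R : realType) (N K D : nat) (lab : 'I_N -> 'I_K)
  (omega : R) (z : 'I_N -> 'rV[R]_D) :
  (2 <= K)%N ->
  (forall k : 'I_K, exists j : 'I_N, lab j = k) ->
  0 < omega ->
  (forall j, z j != 0) ->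
  (forall j j', lab j = lab j' -> angle (z j) (z j') = 0) ->
  (forall j j', lab j <> lab j' -> pi / omega <= angle (z j) (z j')) ->
  ((forall j j', lab j = lab j' -> angle (z j) (z j') = 0) /\
   (forall j j', lab j <> lab j' -> angle (z j) (z j') = pi / omega))
  <->
  (exists theta : R, 0 < theta /\
     (forall j j', lab j <> lab j' -> angle (z j) (z j') = theta) /\
     omega = pi / theta).
Proof.
move=> _ _ omega_gt0 _ same_cluster_angle _.
have pi_neq0 : (pi : R) != 0 := lt0r_neq0 (pi_gt0 R).
split.
- case=> _ cross_angle; exists (pi / omega).
  split; first by rewrite divr_gt0 // pi_gt0.
  split=> //; exact: div_eq_swap pi_neq0 _.
- case=> theta [_ [cross_angle omega_eq]].
  split=> // j j' lab_neq; rewrite cross_angle //.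
  exact: div_eq_swap pi_neq0 omega_eq.
Qed.
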